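(* Fix $N\ge 1$ and $\Delta t>0$. Let $\mathbf{b}_n,\mathbf{b}_{n+1}\in\mathbb{C}^N$ with components $b_{j,n},b_{j,n+1}$, with the convention $b_{0,m}=b_{N+1,m}=0$ for $m\in\{n,n+1\}$, and suppose that $\mathbf{b}_{n+1}$ is an exact solution of the system $$b_{j,n+1}=b_{j,n}+\Delta t\Big(-i\,|b|^2_{j,n+1/2}\,b_{j,n+1/2}+2i\,\overline{b_{j,n+1/2}}\,\big(b_{j+1,n+1/2}^2+b_{j-1,n+1/2}^2\big)\Big),\qquad j=1,\dots,N,$$ where $b_{j,n+1/2}=\tfrac12(b_{j,n}+b_{j,n+1})$ and $|b|^2_{j,n+1/2}=\tfrac12\big(|b_{j,n}|^2+|b_{j,n+1}|^2\big)$. Then $\sum_{j=1}^N|b_{j,n+1}|^2=\sum_{j=1}^N|b_{j,n}|^2$.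
   Context: This is a ''modified midpoint'' discretization of the toy model system $-i\dot b_j=-|b_j|^2b_j+2b_{j-1}^2\bar b_j+2b_{j+1}^2\bar b_j$, $j=1,\dots,N$, with $b_0=b_{N+1}=0$; the conserved quantity is the mass $\mathcal{M}[\mathbf{b}]=\sum_j|b_j|^2$. *)

From mathcomp Require Import all_boot all_order all_algebra.
From mathcomp Require Export complex.
Set Implicit Arguments. Unset Strict Implicit. Unset Printing Implicit Defensive.
Import Order.TTheory GRing.Theory Num.Theory.
Local Open Scope ring_scope.
Local Open Scope complex_scope.

(* A vector b in C^N, indexed by 'I_N (component j = 1..N is b (j-1)),
   extended by zero: bext b j = b_j for 1 <= j <= N, and b_0 = b_{N+1} = 0. *)
Definition bext (R : rcfType) (N : nat) (b : 'I_N -> R[i]) (j : nat) : R[i] :=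
  match j with
  | 0 => 0
  | j'.+1 => match @insub _ (fun k => (k < N)%N) 'I_N j' with
             | Some k => b k
             | None => 0
             end
  end.

Definition midpoint_step (R : rcfType) (N : nat) (dt : R)
    (bn bn1 : 'I_N -> R[i]) (j : nat) : Prop :=
  let bh := fun k => (bext bn k + bext bn1 k) / 2 in
  let abs2h := (`|bext bn j| ^+ 2 + `|bext bn1 j| ^+ 2) / 2 in
  bext bn1 j = bext bn j + dt%:C *
    (- 'i * abs2h * bh j
     + 2 * 'i * (bh j)^* * ((bh j.+1) ^+ 2 + (bh j.-1) ^+ 2)).

Definition mass (R : rcfType) (N : nat) (b : 'I_N -> R[i]) : R[i] :=
  \sum_(j < N) `|b j| ^+ 2.

(* The scheme is designed so that the mass change at site j is a discrete
   divergence.  Writing h for the midpoint values, y = x + c F for the step and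
   conj y = conj x + c conj F for its conjugate (c = dt is real), one has
   |y|^2 - |x|^2 = c (h conj F + F conj h); the self-interaction term drops out
   because it is i times a real multiple of |h|^2, and what remains is
   2 i dt (flux(h_j, h_{j+1}) - flux(h_{j-1}, h_j)).  Summing over j
   telescopes, and the flux vanishes at the zero boundary values. *)
From mathcomp Require Import all_boot all_order all_algebra.
From mathcomp Require Import complex.
From mathcomp Require Import ring.
Import GRing.Theory Num.Theory.
Local Open Scope ring_scope.

Lemma midpoint_product_increment {K : fieldType} {x xs y ys h hs c F Fs : K} :
  (2 : K) != 0 ->
  y = x + c * F -> ys = xs + c * Fs -> h = (x + y) / 2 -> hs = (xs + ys) / 2 ->
  y * ys - x * xs = c * (h * Fs + F * hs).
Proof. by move=> n2 -> -> -> ->; field. Qed.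

Definition flux {C : numClosedFieldType} (a b : C) : C :=
  a^* ^+ 2 * b ^+ 2 - a ^+ 2 * b^* ^+ 2.

Lemma flux0l (C : numClosedFieldType) (b : C) : flux 0 b = 0.
Proof. by rewrite /flux rmorph0 expr0n !mul0r subrr. Qed.

Lemma flux0r (C : numClosedFieldType) (a : C) : flux a 0 = 0.
Proof. by rewrite /flux rmorph0 expr0n !mulr0 subrr. Qed.

Lemma midpoint_sqr_norm_increment {C : numClosedFieldType} {x y hm hp c I : C} :
  c^* = c -> I^* = - I ->
  let h := (x + y) / 2 in
  let A := (`|x| ^+ 2 + `|y| ^+ 2) / 2 in
  y = x + c * (- I * A * h + 2 * I * h^* * (hp ^+ 2 + hm ^+ 2)) ->
  `|y| ^+ 2 - `|x| ^+ 2 = c * (2 * I) * (flux h hp - flux hm h).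
Proof.
move=> c_real I_imag h A step.
have n2 : (2 : C) != 0 by rewrite pnatr_eq0.
have A_real : A^* = A.
  by apply/conj_Creal; rewrite rpredM ?rpredD ?rpredX ?normr_real ?rpredV ?realn.
have hE : h = (x + y) / 2 by [].
have hsE : h^* = (x^* + y^*) / 2.
  by rewrite hE rmorphM rmorphV ?unitfE //= conjC_nat rmorphD.
clearbody h A.
have step_conj := congr1 Num.conj step.
rewrite !(rmorphD, rmorphM, rmorphN, rmorphXn) /= in step_conj.
rewrite c_real I_imag A_real ?conjCK ?conjC_nat ?rmorph_nat ?rmorph1 ?opprK in step_conj.
rewrite !normCK (midpoint_product_increment n2 step step_conj hE hsE) /flux.
ring.
Qed.

Lemma bextS {R : rcfType} {N : nat} (b : 'I_N -> R[i]) (k : 'I_N) :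
  bext b k.+1 = b k.
Proof. by rewrite /= valK. Qed.

Lemma bext_out {R : rcfType} {N : nat} (b : 'I_N -> R[i]) : bext b N.+1 = 0.
Proof. by rewrite /= insubF // ltnn. Qed.

Section MidpointStep.

Variables (R : rcfType) (N : nat) (dt : R) (bn bn1 : 'I_N -> R[i]).

Let h (j : nat) : R[i] := (bext bn j + bext bn1 j) / 2.

Lemma midpoint_step_sqr_norm (k : 'I_N) :
  midpoint_step dt bn bn1 k.+1 ->
  `|bn1 k| ^+ 2 - `|bn k| ^+ 2 =
    dt%:C%C * (2 * 'i%C) * (flux (h k.+1) (h k.+2) - flux (h k) (h k.+1)).
Proof.
rewrite /midpoint_step => step; cbv zeta in step.
have dt_real : (dt%:C%C)^* = dt%:C%C by exact: conjc_real.
have i_imag : ('i%C : R[i])^* = - 'i%C by rewrite complexiE conjCi.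
by rewrite -(bextS bn1 k) -(bextS bn k) (midpoint_sqr_norm_increment dt_real i_imag step).
Qed.

Lemma midpoint_mass_conserved :
  (forall k : 'I_N, midpoint_step dt bn bn1 k.+1) -> mass bn1 = mass bn.
Proof.
move=> step; apply/eqP; rewrite -subr_eq0 /mass -sumrB.
rewrite (eq_bigr _ (fun k _ => midpoint_step_sqr_norm k (step k))) -mulr_sumr.
rewrite -(big_mkord xpredT (fun k => flux (h k.+1) (h k.+2) - flux (h k) (h k.+1))).
have h0 : h 0 = 0 by rewrite /h /= addr0 mul0r.
have hN : h N.+1 = 0 by rewrite /h !bext_out addr0 mul0r.
by rewrite telescope_sumr // hN h0 flux0r flux0l subrr mulr0.
Qed.

End MidpointStep.

Theorem proposition2p2 (R : rcfType) (N : nat) (dt : R)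
    (bn bn1 : 'I_N -> R[i]) :
  (1 <= N)%N -> 0 < dt ->
  (forall j : nat, (1 <= j <= N)%N -> midpoint_step dt bn bn1 j) ->
  mass bn1 = mass bn.
Proof.
move=> _ _ step; apply: midpoint_mass_conserved => k.
by apply: step; rewrite ltn_ord.
Qed.
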